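(* Let $A$ be a synaptic algebra, let $p,q\in P$ be arbitrary projections, and let $c:=(pqp+p^{\perp}q^{\perp}p^{\perp})^{1/2}$ and $s:=(pq^{\perp}p+p^{\perp}qp^{\perp})^{1/2}$. Let $k$ be the symmetry of the polar decomposition of $pqp^{\perp}+p^{\perp}qp\in A$, so that $pqp^{\perp}+p^{\perp}qp=csk=kcs$ (here $cs=|pqp^{\perp}+p^{\perp}qp|$). Then \[ q=c^{2}p+csk+s^{2}p^{\perp}, \] where $pqp=c^{2}p=pc^{2}$, $p^{\perp}qp^{\perp}=s^{2}p^{\perp}=p^{\perp}s^{2}$, $pqp^{\perp}+p^{\perp}qp=csk$, $k$ is a symmetry, $cCs$, $cCk$, $sCk$, and $k\in CC(pqp^{\perp}+p^{\perp}qp)$.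
   Context: Synaptic algebra (Foulis): $R$ is a real linear associative algebra with unit $1$, and $A\subseteq R$ is a real linear subspace with $1\in A$. For $a,b\in A$ write $aCb$ iff $ab=ba$; $C(a):=\{b\in A: aCb\}$; $CC(a):=\{b\in A: bCd \text{ for all } d\in C(a)\}$. $A$ is a synaptic algebra with enveloping algebra $R$ iff: (SA1) $A$ is a partially ordered archimedean real linear space with positive cone $A^+=\{a\in A:0\le a\}$, $1$ is an order unit, and $\|\cdot\|$ is the corresponding order-unit norm; (SA2) $a\in A\Rightarrow a^2\in A^+$; (SA3) $a,b\in A^+\Rightarrow aba\in A^+$; (SA4) if $a\in A$, $b\in A^+$ and $aba=0$ then $ab=ba=0$; (SA5) if $a\in A^+$ there is $b\in A^+\cap CC(a)$ with $b^2=a$; (SA6) for $a\in A$ there is $p\in A$ with $p=p^2$ and, for all $b\in A$, $ab=0\Leftrightarrow pb=0$; (SA7) if $1\le a\in A$ there is $b\in A$ with $ab=ba=1$; (SA8) if $a,b\in A$, $a_1\le a_2\le\cdots$ are pairwise commuting elements of $C(b)$ and $\|a-a_n\|\to0$, then $a\in C(b)$. $A$ is assumed nondegenerate ($1\ne0$). Products are computed in $R$ (for $a,b,d\in A$ one has $aba\in A$, $ab+ba\in A$, and $ab\in A$ when $aCb$). $P:=\{p\in A:p=p^2\}$ is the set of projections, partially ordered by the restriction of $\le$; it is an orthomodular lattice with orthocomplement $p^{\perp}:=1-p$, meet $\wedge$, join $\vee$. For $0\le a$, $a^{1/2}$ is the unique $b\in A^+$ with $b^2=a$, and $|a|:=(a^2)^{1/2}$.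 The carrier $a^{\circ}$ of $a\in A$ is the unique projection such that for all $b\in A$, $ab=0\Leftrightarrow a^{\circ}b=0$. A symmetry is $u\in A$ with $u^2=1$. For $a\in A$, the signum of $a$ is the partial symmetry $t\in A$ with $t^2=a^{\circ}$, $t\in CC(a)$, $a=|a|t=t|a|$; the symmetry of the polar decomposition of $a$ is $u:=t+(a^{\circ})^{\perp}$, which satisfies $u^2=1$, $u\in CC(a)$, $a=|a|u=u|a|$, $|a|=ua=au$. *)

(* scalars are an abstract R : realType (the real numbers),
   the enveloping algebra is an algType over R (associative, unital,
   nontrivial: algType extends nzRingType, so 1 <> 0). *)
From HB Require Import structures.
From mathcomp Require Import all_boot all_order all_algebra.
From mathcomp Require Import reals.
Set Implicit Arguments. Unset Strict Implicit. Unset Printing Implicit Defensive.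
Import Order.TTheory GRing.Theory Num.Theory.
Local Open Scope ring_scope.

Section SynapticDefs.
Variables (R : realType) (E : algType R).
(* A : the subspace of the enveloping algebra E; pos : the positive cone A^+ *)
Variables (A : E -> Prop) (pos : E -> Prop).

Definition sle (a b : E) : Prop := pos (b - a).

Definition scommute (a b : E) : Prop := a * b = b * a.

Definition Cset (a : E) : E -> Prop := fun b => A b /\ scommute a b.
Definition CCset (a : E) : E -> Prop :=
  fun b => A b /\ (forall d, Cset a d -> scommute b d).

(* ||a - a_n|| -> 0 for the order-unit norm ||x|| = inf{l >= 0 : -l.1 <= x <= l.1}:
   for every eps > 0, eventually -eps.1 <= a - a_n <= eps.1 *)
Definition norm_conv (an : nat -> E) (a : E) : Prop :=
  forall eps : R, 0 < eps -> exists N : nat, forall n, (N <= n)%N ->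
    sle (- (eps *: 1)) (a - an n) /\ sle (a - an n) (eps *: 1).

Record synaptic : Prop := {
  sa_sub0 : A 0;
  sa_sub1 : A 1;
  sa_subD : forall a b, A a -> A b -> A (a + b);
  sa_subZ : forall (l : R) a, A a -> A (l *: a);
  sa_posA : forall a, pos a -> A a;
  sa_posD : forall a b, pos a -> pos b -> pos (a + b);
  sa_posZ : forall (l : R) a, 0 <= l -> pos a -> pos (l *: a);
  sa_posN : forall a, pos a -> pos (- a) -> a = 0;
  sa_unit : forall a, A a -> exists l : R, sle a (l *: 1);
  sa_archi : forall a b, A a -> A b ->
    (forall n : nat, sle (n%:R *: a) b) -> sle a 0;
  sa2 : forall a, A a -> pos (a * a);
  sa3 : forall a b, pos a -> pos b -> pos (a * b * a);
  sa4 : forall a b, A a -> pos b -> a * b * a = 0 -> a * b = 0 /\ b * a = 0;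
  sa5 : forall a, pos a -> exists b, pos b /\ CCset a b /\ b * b = a;
  sa6 : forall a, A a -> exists p, A p /\ p * p = p /\
          (forall b, A b -> (a * b = 0 <-> p * b = 0));
  sa7 : forall a, A a -> sle 1 a -> exists b, A b /\ a * b = 1 /\ b * a = 1;
  sa8 : forall a b (an : nat -> E), A a -> A b ->
          (forall n, Cset b (an n)) ->
          (forall n, sle (an n) (an n.+1)) ->
          (forall m n, scommute (an m) (an n)) ->
          norm_conv an a -> Cset b a
}.

Definition is_proj (p : E) : Prop := A p /\ p * p = p.

Definition is_sqrt (a b : E) : Prop := pos b /\ b * b = a.

Definition is_carrier (a e : E) : Prop :=
  is_proj e /\ forall b, A b -> (a * b = 0 <-> e * b = 0).

Definition is_signum (a e absa t : E) : Prop :=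
  A t /\ t * t = e /\ CCset a t /\ a = absa * t /\ a = t * absa.

End SynapticDefs.

(* Write x' for 1 - x.  With d := (p - q)^2, a direct computation shows that d
   commutes with p and q and that pqp = (1 - d)p, p'qp' = dp', pq'p + p'qp' = d and pqp + p'q'p' = 1 - d, so
   c^2 = 1 - d and s^2 = d; the Peirce decomposition of q relative to p then reads
   q = c^2 p + a + s^2 p'.  Since c and s lie in the double commutants of their
   squares, they commute with d, hence with each other and with p, q and a.  The
   off-diagonal part a satisfies a^2 = (1 - d) d = (cs)^2, and cs >= 0 as a product
   of commuting positive elements, so |a| = cs by uniqueness of positive square
   roots.  Finally k = t + (1 - a°) is a symmetry with a = |a| k = k |a| that, like
   the signum t, lies in CC(a). *)

From HB Require Import structures.
From mathcomp Require Import all_boot all_order all_algebra.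
From mathcomp Require Import reals.
Import Order.TTheory GRing.Theory Num.Theory.
Local Open Scope ring_scope.
Set Implicit Arguments. Unset Strict Implicit.

Lemma peirce_decomposition (E : pzRingType) (p x : E) :
  x = p * x * p + (p * x * (1 - p) + (1 - p) * x * p) + (1 - p) * x * (1 - p).
Proof.
have {1}-> : x = (p + (1 - p)) * x * (p + (1 - p)) by rewrite subrKC mul1r mulr1.
by rewrite (mulrDl p (1 - p) x) (mulrDr _ p (1 - p)) !(mulrDl (p * x)) !addrA
  (addrAC (p * x * p)).
Qed.

Section Idempotent.
Variables (E : pzRingType) (p q : E).
Hypotheses (pp : p * p = p) (qq : q * q = q).
Local Notation d := ((p - q) * (p - q)).

Lemma idem_mul_compl : p * (1 - p) = 0.
Proof. by rewrite mulrBr mulr1 pp subrr. Qed.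

Lemma compl_mul_idem : (1 - p) * p = 0.
Proof. by rewrite mulrBl mul1r pp subrr. Qed.

Lemma idem_compl : (1 - p) * (1 - p) = 1 - p.
Proof. by rewrite mulrBr mulr1 compl_mul_idem subr0. Qed.

Lemma idem_diff2E : d = p - p * q - q * p + q.
Proof. by rewrite mulrBl !mulrBr pp qq opprB addrA addrAC. Qed.

Lemma mul_idem_diff2 : p * d = p - p * q * p.
Proof. by rewrite idem_diff2E mulrDr !mulrBr !mulrA pp addrAC subrK. Qed.

Lemma idem_diff2_mul : d * p = p - p * q * p.
Proof. by rewrite idem_diff2E mulrDl !mulrBl pp -(mulrA q p p) pp subrK. Qed.

Lemma comm_idem_diff2 : GRing.comm p d.
Proof. by rewrite /GRing.comm mul_idem_diff2 idem_diff2_mul. Qed.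

Lemma idem_sandwich : p * q * p = (1 - d) * p.
Proof. by rewrite (mulrBl p 1) mul1r idem_diff2_mul subKr. Qed.

Lemma idem_sandwich_compl : p * (1 - q) * p = p * d.
Proof. by rewrite mul_idem_diff2 (mulrBr p 1) mulr1 (mulrBl p p) pp. Qed.

End Idempotent.

Section IdempotentPair.
Variables (E : pzRingType) (p q : E).
Hypotheses (pp : p * p = p) (qq : q * q = q).
Local Notation r := (1 - p).
Local Notation d := ((p - q) * (p - q)).

Lemma idem_diff2C : (q - p) * (q - p) = d.
Proof. by rewrite -opprB mulrNN. Qed.

Lemma compl_idem_diff2 : (r - q) * (r - q) = 1 - d.
Proof.
apply/eqP; rewrite eq_sym subr_eq (idem_diff2E (idem_compl pp) qq) (idem_diff2E pp qq).
rewrite addrACA (addrACA (r - r * q) (- (q * r))) (addrACA r (- (r * q))) -!opprD.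
by rewrite -mulrDl -mulrDr subrK mul1r mulr1 -(addrA 1) -opprD subrK.
Qed.

Lemma comm_compl_idem_diff2 : GRing.comm r d.
Proof. by apply/commr_sym/commrB; [apply: commr1 | apply/commr_sym/comm_idem_diff2]. Qed.

Lemma comm_idem_diff2_r : GRing.comm q d.
Proof. by rewrite -idem_diff2C; apply: comm_idem_diff2. Qed.

Lemma compl_sandwich : r * q * r = d * r.
Proof. by rewrite (idem_sandwich (idem_compl pp) qq) compl_idem_diff2 subKr. Qed.

Lemma compl_sandwich_compl : r * (1 - q) * r = (1 - d) * r.
Proof.
rewrite (idem_sandwich_compl (idem_compl pp) qq) compl_idem_diff2.
by apply/commrB; [apply: commr1 | apply: comm_compl_idem_diff2].
Qed.

Lemma cos2_sandwich : p * q * p + r * (1 - q) * r = 1 - d.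
Proof. by rewrite (idem_sandwich pp qq) compl_sandwich_compl -mulrDr subrKC mulr1. Qed.

Lemma sin2_sandwich : p * (1 - q) * p + r * q * r = d.
Proof.
by rewrite (idem_sandwich_compl pp qq) compl_sandwich (comm_idem_diff2 pp qq)
  -mulrDr subrKC mulr1.
Qed.

Lemma idem_pair_decomposition :
  q = (1 - d) * p + (p * q * r + r * q * p) + d * r.
Proof. by rewrite -idem_sandwich // -compl_sandwich; apply: peirce_decomposition. Qed.

Lemma comm_idem_diff2_offdiag : GRing.comm d (p * q * r + r * q * p).
Proof.
have dp : GRing.comm d p by apply/commr_sym/comm_idem_diff2.
have dq : GRing.comm d q by apply/commr_sym/comm_idem_diff2_r.
have dr : GRing.comm d r by apply/commr_sym/comm_compl_idem_diff2.
by apply: commrD; apply: commrM => //; apply: commrM.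
Qed.

Lemma offdiag_sq :
  (p * q * r + r * q * p) * (p * q * r + r * q * p) = (1 - d) * d.
Proof.
have qrq : q * r * q = q * d.
  by rewrite (idem_sandwich_compl qq pp) idem_diff2C.
have qpq : q * p * q = (1 - d) * q.
  by rewrite (idem_sandwich qq pp) idem_diff2C.
have pr0 : p * q * r * (p * q * r) = 0.
  by rewrite !mulrA -(mulrA (p * q) r p) (compl_mul_idem pp) mulr0 !mul0r.
have rp0 : r * q * p * (r * q * p) = 0.
  by rewrite !mulrA -(mulrA (r * q) p r) (idem_mul_compl pp) mulr0 !mul0r.
have prp : p * q * r * (r * q * p) = (1 - d) * d * p.
  have -> : p * q * r * (r * q * p) = p * (q * r * q) * p.
    by rewrite !mulrA -(mulrA (p * q) r r) (idem_compl pp).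
  rewrite qrq; have -> : p * (q * d) * p = p * q * p * d.
    by rewrite -(mulrA p) -(mulrA q) -(comm_idem_diff2 pp qq) !mulrA.
  by rewrite (idem_sandwich pp qq) -[LHS]mulrA (comm_idem_diff2 pp qq) mulrA.
have rpr : r * q * p * (p * q * r) = (1 - d) * d * r.
  have -> : r * q * p * (p * q * r) = r * (q * p * q) * r.
    by rewrite !mulrA -(mulrA (r * q) p p) pp.
  have rC : GRing.comm r (1 - d).
    by apply: commrB; [apply: commr1 | apply: comm_compl_idem_diff2].
  by rewrite qpq mulrA rC -!mulrA (mulrA r q r) compl_sandwich !mulrA.
rewrite (mulrDl (p * q * r)) (mulrDr (p * q * r)) (mulrDr (r * q * p)).
by rewrite pr0 rp0 add0r addr0 prp rpr -mulrDr subrKC mulr1.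
Qed.

End IdempotentPair.

Section Synaptic.
Variables (R : realType) (E : algType R) (A pos : E -> Prop).
Hypothesis HA : synaptic A pos.

Lemma sa_subN x : A x -> A (- x).
Proof. by move=> Ax; rewrite -scaleN1r; apply: (sa_subZ HA). Qed.

Lemma sa_subB x y : A x -> A y -> A (x - y).
Proof. by move=> Ax Ay; apply: (sa_subD HA) => //; apply: sa_subN. Qed.

Lemma sa_sub_sqr x : A x -> A (x * x).
Proof. by move=> Ax; apply/(sa_posA HA)/(sa2 HA). Qed.

Lemma sa_subM_comm x y : A x -> A y -> GRing.comm x y -> A (x * y).
Proof.
move=> Ax Ay xy.
have sq_sum : (x + y) * (x + y) = x * x + (x * y) *+ 2 + y * y.
  by rewrite mulrDl !mulrDr -xy mulr2n !addrA.
have -> : x * y = 2^-1 *: ((x + y) * (x + y) - x * x - y * y).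
  rewrite sq_sum addrAC addrK (addrC (x * x)) addrK -scaler_nat scalerA.
  by rewrite mulVf ?scale1r ?pnatr_eq0.
by apply/(sa_subZ HA)/sa_subB; [apply: sa_subB|]; apply: sa_sub_sqr => //;
  apply: (sa_subD HA).
Qed.

Lemma sa_sqr_eq0 x : A x -> x * x = 0 -> x = 0.
Proof.
move=> Ax xx0.
have pos1 : pos 1 by rewrite -(mulr1 1); apply/(sa2 HA)/(sa_sub1 HA).
have x1x : x * 1 * x = 0 by rewrite mulr1.
by have [] := sa4 HA Ax pos1 x1x; rewrite mulr1.
Qed.

Lemma pos_mulC x y : pos x -> pos y -> GRing.comm x y -> pos (x * y).
Proof.
move=> px py xy; have [h [ph [[_ hCC] hh]]] := sa5 HA px.
have hy : GRing.comm h y by apply: hCC; split; [apply: (sa_posA HA) | apply/commr_sym].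
by have := sa3 HA ph py; rewrite -mulrA -hy mulrA hh.
Qed.

Lemma pos_sqrt_eq_comm b b' : pos b -> pos b' -> b * b = b' * b' ->
  GRing.comm b b' -> b = b'.
Proof.
move=> pb pb' sq bb'; set x := b - b'.
have Ax : A x by apply: sa_subB; apply: (sa_posA HA).
have xx_pos : pos (x * x) by apply: (sa2 HA).
have bx : GRing.comm b x by apply: commrB.
have b'x : GRing.comm b' x by apply/commrB/commr_refl/commr_sym.
have b_xx := pos_mulC pb xx_pos (commrM bx bx).
have b'_xx := pos_mulC pb' xx_pos (commrM b'x b'x).
(* (b + b') x = 0 forces the positive elements b x^2 and b' x^2 to cancel, so x^3 = 0. *)
have sum_x0 : (b + b') * x = 0.
  by rewrite /x mulrDl !mulrBr sq bb' addrA subrK subrr.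
have sum0 : b * (x * x) + b' * (x * x) = 0 by rewrite -mulrDl mulrA sum_x0 mul0r.
have bxx0 : b * (x * x) = 0.
  by apply: (sa_posN HA) => //; rewrite -(addr0 (- _)) -sum0 addKr.
have b'xx0 : b' * (x * x) = 0 by rewrite -sum0 bxx0 add0r.
have xxx0 : x * (x * x) = 0 by rewrite {1}/x mulrBl bxx0 b'xx0 subrr.
apply/eqP; rewrite -subr_eq0; apply/eqP/sa_sqr_eq0/sa_sqr_eq0 => //.
  exact: sa_sub_sqr.
by rewrite -mulrA xxx0 mulr0.
Qed.

Lemma pos_sqrt_CC b : pos b -> CCset A (b * b) b.
Proof.
move=> pb; have [b' [pb' [CCb' b'b']]] := sa5 HA (sa2 HA (sa_posA HA pb)).
have bb' : GRing.comm b b'.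
  apply/commr_sym/CCb'.2; split; first exact: (sa_posA HA).
  exact/commr_sym/commrM.
by rewrite {3}(pos_sqrt_eq_comm pb pb' (esym b'b') bb').
Qed.

Lemma pos_sqrt_unique b b' : pos b -> pos b' -> b * b = b' * b' -> b = b'.
Proof.
move=> pb pb' sq; apply: pos_sqrt_eq_comm => //.
apply: (pos_sqrt_CC pb).2; split; first exact: (sa_posA HA).
by rewrite sq; apply/commr_sym/commrM.
Qed.

Lemma pos_sqrt_comm b x : pos b -> A x -> GRing.comm x (b * b) -> GRing.comm x b.
Proof.
by move=> pb Ax xbb; apply/commr_sym/(pos_sqrt_CC pb).2; split=> //; apply/commr_sym.
Qed.

Lemma sa_offdiag p q : is_proj A p -> is_proj A q ->
  A (p * q * (1 - p) + (1 - p) * q * p).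
Proof.
move=> [Ap pp] [Aq qq]; set a := _ + _; set d := (p - q) * (p - q).
have Ad : A d by apply/sa_sub_sqr/sa_subB.
have A1d : A (1 - d) by apply/sa_subB/Ad/(sa_sub1 HA).
have -> : a = q - (1 - d) * p - d * (1 - p).
  rewrite {1}(idem_pair_decomposition pp qq).
  by rewrite addrAC addrK (addrC ((1 - d) * p)) addrK.
apply/sa_subB; first apply/sa_subB => //.
  apply/sa_subM_comm => //.
  by apply/commr_sym/commrB; [apply: commr1 | apply: comm_idem_diff2].
apply/sa_subM_comm => //; last exact/commr_sym/comm_compl_idem_diff2.
by apply/sa_subB/Ap/(sa_sub1 HA).
Qed.

Lemma comm_proj_eq0 x f : A x -> is_proj A f -> GRing.comm x f ->
  x * x * f = 0 -> x * f = 0.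
Proof.
move=> Ax [Af ff] xf xxf0; apply: sa_sqr_eq0; first exact: sa_subM_comm.
by rewrite -mulrA (mulrA f) -xf -mulrA ff mulrA xxf0.
Qed.

Lemma polar_symmetry a e absa t : A a -> is_carrier A a e ->
  is_sqrt pos (a * a) absa -> is_signum A a e absa t ->
  let k := t + (1 - e) in
  [/\ A k, k * k = 1, CCset A a k, a = absa * k & a = k * absa].
Proof.
move=> Aa [[Ae ee] carrier] [pabs absaa] [At [tt [[_ tCC] [a_abs_t a_t_abs]]]] k.
set f := 1 - e.
have Af : is_proj A f by split; [apply/sa_subB/Ae/(sa_sub1 HA) | apply: idem_compl].
have kEt : k = t + (1 - t * t) by rewrite tt.
have comm_k x : GRing.comm t x -> GRing.comm x k.
  move=> /commr_sym xt; rewrite kEt.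
  exact: commrD xt (commrB (commr1 x) (commrM xt xt)).
have ta : GRing.comm t a by apply: tCC.
have af : GRing.comm a f.
  by rewrite /f -tt; apply: commrB (commr1 a) (commrM _ _); apply/commr_sym.
have tf : GRing.comm t f by rewrite /f -tt; apply: commrB (commr1 t) (commrM _ _).
have af0 : a * f = 0 by apply/(carrier f Af.1)/idem_mul_compl.
have tf0 : t * f = 0 by apply: comm_proj_eq0 => //; rewrite tt idem_mul_compl.
have absf : GRing.comm absa f.
  apply/commr_sym/(pos_sqrt_comm pabs Af.1); rewrite absaa.
  by apply: commrM; apply/commr_sym.
have absf0 : absa * f = 0.
  apply: comm_proj_eq0 => //; first exact: (sa_posA HA).
  by rewrite absaa -mulrA af0 mulr0.
have kE : k = t + f by [].
split.
- exact: (sa_subD HA At Af.1).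
- rewrite kE (mulrDl t f) (mulrDr t t f) (mulrDr f t f).
  by rewrite tt -tf tf0 Af.2 addr0 add0r subrKC.
- split; first exact: (sa_subD HA At Af.1).
  by move=> x Cx; apply/commr_sym/comm_k/tCC.
- by rewrite kE (mulrDr absa t f) absf0 addr0.
- by rewrite kE (mulrDl t f absa) -absf absf0 addr0.
Qed.

End Synaptic.

Theorem theorem5p6 (R : realType) (E : algType R) (A pos : E -> Prop)
  (HA : synaptic A pos) (p q : E) (hp : is_proj A p) (hq : is_proj A q)
  (c s : E)
  (hc : is_sqrt pos (p * q * p + (1 - p) * (1 - q) * (1 - p)) c)
  (hs : is_sqrt pos (p * (1 - q) * p + (1 - p) * q * (1 - p)) s)
  (e absa t : E)
  (he : is_carrier A (p * q * (1 - p) + (1 - p) * q * p) e)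
  (habs : is_sqrt pos ((p * q * (1 - p) + (1 - p) * q * p)
                        * (p * q * (1 - p) + (1 - p) * q * p)) absa)
  (ht : is_signum A (p * q * (1 - p) + (1 - p) * q * p) e absa t) :
  let a := p * q * (1 - p) + (1 - p) * q * p in
  let k := t + (1 - e) in
  [/\ q = c * c * p + c * s * k + s * s * (1 - p),
      p * q * p = c * c * p /\ c * c * p = p * (c * c),
      (1 - p) * q * (1 - p) = s * s * (1 - p) /\ s * s * (1 - p) = (1 - p) * (s * s),
      [/\ c * s = absa, a = c * s * k & a = k * (c * s)] &
      [/\ A k /\ k * k = 1, scommute c s, scommute c k, scommute s k & CCset A a k]].
Proof.
move=> a k; case: (hp) => Ap pp; case: (hq) => Aq qq.
case: hc => pc cc; case: hs => ps ss.
pose d := (p - q) * (p - q).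
have ccE : c * c = 1 - d by rewrite cc cos2_sandwich.
have ssE : s * s = d by rewrite ss sin2_sandwich.
have [Ac As] : A c /\ A s by split; apply: (sa_posA HA).
have Aa : A a by apply: (sa_offdiag HA).
have comm_cs x : A x -> GRing.comm x d -> GRing.comm x c /\ GRing.comm x s.
  move=> Ax xd; split; apply: (pos_sqrt_comm HA) => //; rewrite ?ccE ?ssE //.
  exact: commrB (commr1 x) xd.
have sd : GRing.comm s d by rewrite -ssE; apply: commrM.
have [sc _] := comm_cs s As sd.
have [a_c a_s] := comm_cs a Aa (commr_sym (comm_idem_diff2_offdiag pp qq)).
have cs_abs : c * s = absa.
  apply: (pos_sqrt_unique HA (pos_mulC HA pc ps (commr_sym sc)) habs.1).
  by rewrite habs.2 offdiag_sq // -/d -ccE -ssE !mulrA -(mulrA c s c) sc !mulrA.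
have [Ak kk [_ CCk] a_absk a_kabs] := polar_symmetry HA Aa he habs ht.
have [ck sk] : GRing.comm c k /\ GRing.comm s k by split; apply/commr_sym/CCk.
rewrite cs_abs ccE ssE; split=> //.
- by rewrite -a_absk; apply: idem_pair_decomposition.
- rewrite (idem_sandwich pp qq); split=> //.
  by apply/commr_sym/commrB; [apply: commr1 | apply: comm_idem_diff2].
- by rewrite (compl_sandwich pp qq); split=> //; apply/commr_sym/comm_compl_idem_diff2.
Qed.
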